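(* Let $(\mathbf{x},\mathbf{F})$ be an LP seed of rank $n$ with $\hat F_k=F_k$ for all $k\in[1,n]$. Then for all $i\ne k$, $F_i$ is not equal to a unit multiple of $F_k$; consequently any two distinct exchange polynomials $F_i,F_k$ ($i\neq k$) are coprime in $R[x_1,\dots,x_n]$.
   Context: $R$ is a unique factorization domain containing $\mathbb{Z}$ and $\mathcal{F}$ is the field of rational functions in $n$ variables over $\mathrm{Frac}(R)$. An LP seed of rank $n$ is a pair $(\mathbf{x},\mathbf{F})$ where $\mathbf{x}=\{x_1,\dots,x_n\}$ is a transcendence basis of $\mathcal{F}$ over $\mathrm{Frac}(R)$ and $\mathbf{F}=\{F_1,\dots,F_n\}$ are irreducible polynomials in $R[x_1,\dots,x_n]$ with $x_j\nmid F_i$ for all $i,j$ and $F_i$ not involving $x_i$. The exchange Laurent polynomial is $\hat F_j=F_j/\prod_{k\neq j}x_k^{a_k}$, with $a_k\in\mathbb{Z}_{\ge0}$ maximal such that $F_k^{a_k}$ divides $F_j|_{x_k\leftarrow F_k/x'_k}$ in $R[x_1,\dots,x_{k-1},(x'_k)^{-1},x_{k+1},\dots,x_n]$ ($x'_k$ a new indeterminate). *)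

From HB Require Import structures.
From mathcomp Require Import all_boot all_order all_algebra.
From mathcomp Require Import fraction.
From mathcomp.multinomials Require Import mpoly.

Set Implicit Arguments.
Unset Strict Implicit.
Unset Printing Implicit Defensive.

Import Order.TTheory GRing.Theory.
Local Open Scope ring_scope.

Definition rdvd (A : idomainType) (b a : A) : Prop := exists c : A, a = c * b.

Definition associated (A : idomainType) (a b : A) : Prop :=
  exists2 u : A, u \is a GRing.unit & a = u * b.

Definition irred (A : idomainType) (a : A) : Prop :=
  [/\ a != 0, a \isn't a GRing.unit &
      forall b c : A, a = b * c -> b \is a GRing.unit \/ c \is a GRing.unit].

Definition is_UFD (A : idomainType) : Prop :=
  (forall a : A, a != 0 -> a \isn't a GRing.unit ->
     exists s : seq A, (forall b, b \in s -> irred b) /\ a = \prod_(b <- s) b)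
  /\
  (forall s t : seq A, (forall b, b \in s -> irred b) ->
     (forall b, b \in t -> irred b) ->
     \prod_(b <- s) b = \prod_(b <- t) b ->
     exists t' : seq A, perm_eq t t' /\ size s = size t' /\
       forall i, (i < size s)%N -> associated (nth 0 s i) (nth 0 t' i)).

Definition rcoprime (A : idomainType) (a b : A) : Prop :=
  forall d : A, rdvd d a -> rdvd d b -> d \is a GRing.unit.

(* The cluster variables x_1..x_n are modelled by the formal variables 'X_i
   of {mpoly R[n]} (a transcendence basis of the rational function field). *)

Section LP.
Variables (R : idomainType) (n : nat).

Definition not_involving (p : {mpoly R[n]}) (i : 'I_n) : Prop :=
  forall m, m \in msupp p -> m i = 0%N.

Definition is_LP_seed (F : 'I_n -> {mpoly R[n]}) : Prop :=
  [/\ forall i, irred (F i),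
      forall i j, ~ rdvd ('X_j : {mpoly R[n]}) (F i) &
      forall i, not_involving (F i) i].

(* Substitution x_k <- F_k / x'_k.  The result lives in
   R[x_1,..,x_{k-1},(x'_k)^{-1},x_{k+1},..,x_n]; we represent this polynomial
   ring by {mpoly R[n]} itself, the k-th variable 'X_k standing for (x'_k)^{-1}. *)
Definition subst_exch (F : 'I_n -> {mpoly R[n]}) (k : 'I_n) (p : {mpoly R[n]})
  : {mpoly R[n]} :=
  p \mPo [tuple (if i == k then F k * 'X_i else 'X_i) | i < n].

Definition exch_exponent (F : 'I_n -> {mpoly R[n]}) (j k : 'I_n) (a : nat)
  : Prop :=
  rdvd (F k ^+ a) (subst_exch F k (F j)) /\
  ~ rdvd (F k ^+ a.+1) (subst_exch F k (F j)).

Definition is_hatF (F : 'I_n -> {mpoly R[n]}) (j : 'I_n)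
  (G : {fraction {mpoly R[n]}}) : Prop :=
  exists a : 'I_n -> nat,
    (forall k, k != j -> exch_exponent F j k (a k)) /\
    G = tofrac (F j) / \prod_(k < n | k != j) (tofrac ('X_k : {mpoly R[n]})) ^+ a k.

End LP.

(* If F_i = u F_k, the substitution x_k <- F_k / x'_k fixes F_k (which does
   not involve x_k), so F_k divides the substituted F_i and the exponent a_k
   in the denominator of \hat F_i is positive.  But \hat F_i = F_i forces the
   whole denominator to be 1, i.e. every a_k = 0.  Two irreducibles that are
   not associated are coprime. *)

From HB Require Import structures.
From mathcomp Require Import all_boot all_order all_algebra.
From mathcomp Require Import fraction.
From mathcomp.multinomials Require Import mpoly.
Import GRing.Theory.

Set Implicit Arguments.
Unset Strict Implicit.
Local Open Scope ring_scope.

Lemma irred_coprime (A : idomainType) (a b : A) :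
  irred a -> irred b -> ~ associated a b -> rcoprime a b.
Proof.
move=> [_ _ irr_a] [_ _ irr_b] not_assoc d [c ea] [c' eb].
apply/negPn/negP => dN.
have cU : c \is a GRing.unit by case: (irr_a _ _ ea); rewrite ?(negbTE dN).
have c'U : c' \is a GRing.unit by case: (irr_b _ _ eb); rewrite ?(negbTE dN).
apply: not_assoc; exists (c / c'); first by rewrite unitrMl ?unitrV.
by rewrite ea eb mulrA divrK.
Qed.

Lemma prod_mpolyXn_eq1 (R : idomainType) (n : nat) (P : pred 'I_n)
    (a : 'I_n -> nat) :
  \prod_(j < n | P j) ('X_j : {mpoly R[n]}) ^+ a j = 1 ->
  forall j, P j -> a j = 0%N.
Proof.
move=> /(congr1 (meval (fun _ => (0 : R)))) eval1 j Pj.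
move: eval1; rewrite meval1 rmorph_prod (bigD1 j) //= rmorphXn /= mevalXU.
by case: (a j) => // m; rewrite expr0n mul0r => /eqP; rewrite eq_sym oner_eq0.
Qed.

Section ExchangeExponents.
Variables (R : idomainType) (n : nat) (F : 'I_n -> {mpoly R[n]}).

Lemma subst_exch_id (k : 'I_n) (p : {mpoly R[n]}) :
  not_involving p k -> subst_exch F k p = p.
Proof.
move=> p_free; rewrite /subst_exch comp_mpolyEX {3}(mpolyE p) !big_seq.
apply: eq_bigr => m m_supp; congr (_ *: _).
rewrite comp_mpolyX mpolyXE_id; apply: eq_bigr => i _.
by rewrite tnth_mktuple; case: eqP => // ->; rewrite (p_free m m_supp) !expr0.
Qed.

Lemma associated_exch_exponent_gt0 (i k : 'I_n) (a : nat) :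
  not_involving (F k) k -> associated (F i) (F k) ->
  exch_exponent F i k a -> (0 < a)%N.
Proof.
move=> Fk_free [u _ Fi_u] [_ not_dvd]; case: a not_dvd => // not_dvd.
exfalso; apply: not_dvd; exists (subst_exch F k u).
by rewrite expr1 Fi_u /subst_exch rmorphM /= -/(subst_exch F k (F k)) subst_exch_id.
Qed.

Lemma hatF_id_exponents_eq0 (j : 'I_n) (a : 'I_n -> nat) :
  F j != 0 ->
  tofrac (F j) = tofrac (F j) / \prod_(k < n | k != j) tofrac ('X_k) ^+ a k ->
  forall k, k != j -> a k = 0%N.
Proof.
move=> Fj0 hatF; apply: (prod_mpolyXn_eq1 (R := R)); apply/eqP.
rewrite -tofrac_eq rmorph1 rmorph_prod; apply/eqP.
under eq_bigr do rewrite rmorphXn.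
set Q := \prod_(_ < n | _) _ in hatF *.
have Fj0' : tofrac (F j) != 0 by rewrite tofrac_eq0.
have Q0 : Q != 0.
  by apply: contra_neq Fj0' => Q0; rewrite hatF Q0 invr0 mulr0.
by apply/(mulfI Fj0')/esym; rewrite mulr1 [in RHS]hatF divfK.
Qed.

End ExchangeExponents.

Theorem proposition4p9 (R : idomainType) (n : nat)
  (F : 'I_n -> {mpoly R[n]}) :
  is_UFD R ->
  injective (fun z : int => z%:~R : R) ->
  is_LP_seed F ->
  (forall k : 'I_n, is_hatF F k (tofrac (F k))) ->
  forall i k : 'I_n, i != k ->
    ~ associated (F i) (F k) /\ rcoprime (F i) (F k).
Proof.
move=> _ _ [F_irred _ F_free] hatF_id i k ik.
have not_assoc : ~ associated (F i) (F k).
  move=> assoc; have [a [exps hatF]] := hatF_id i.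
  have ki : k != i by rewrite eq_sym.
  have [Fi0 _ _] := F_irred i.
  have := associated_exch_exponent_gt0 (F_free k) assoc (exps k ki).
  by rewrite (hatF_id_exponents_eq0 Fi0 hatF ki).
by split=> //; apply: irred_coprime.
Qed.
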